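(* Let $N\ge2$, $R>0$, and let $u\in C(B_R,(0,\infty))$ be separable in $B_R$. If $u$ is not radially symmetric with respect to the origin, then there exists $M\in O(N)$ such that: (i) (axial symmetry) for every $\alpha\in(0,R]$ and every $h\in[-\alpha,\alpha]$, $u_M$ is constant on $\{x\in S^{N-1}_\alpha:x_N=h\}$, i.e. $u_M$ is axially symmetric with respect to the $x_N$-axis; (ii) (monotonicity) for every $\alpha\in(0,R]$, the function $\theta\mapsto u_M(0_{N-2},\alpha\cos\theta,\alpha\sin\theta)$ is nonincreasing on $[\pi/2,3\pi/2]$.
   Context: $B_R$ is the closed ball of radius $R$ centered at $0$ in $\mathbb{R}^N$; $S^{N-1}_\alpha$ is the sphere of radius $\alpha$ centered at $0$; $O(N)$ is the orthogonal group and $u_M(x):=u(M^{-1}x)$; $0_k$ is the zero vector of $\mathbb{R}^k$. For an open half-space $H$, $\sigma_H$ is the reflection across $\partial H$. A function $u:B_R\to\mathbb{R}$ is separable in $B_R$ if for every open half-space $H\subset\mathbb{R}^N$ with $0\in\partial H$, either $u(x)\ge u(\sigma_Hx)$ for all $x\in H\cap B_R$, or $u(x)\le u(\sigma_Hx)$ for all $x\in H\cap B_R$. Radially symmetric with respect to the origin means $u(x)=u(y)$ whenever $|x|=|y|$. *)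

From mathcomp Require Import ssreflect ssrfun ssrbool eqtype ssrnat seq choice fintype bigop.
From Stdlib Require Import Reals.

Set Implicit Arguments.
Unset Strict Implicit.
Unset Printing Implicit Defensive.

Open Scope R_scope.

Definition vec (N : nat) := 'I_N -> R.

Definition dot (N : nat) (x y : vec N) : R :=
  \big[Rplus/0]_(i < N) (x i * y i).

Definition norm (N : nat) (x : vec N) : R := sqrt (dot x x).

Definition inBall (N : nat) (R0 : R) (x : vec N) : Prop := norm x <= R0.

(* k-th coordinate (0-based, as a nat), 0 if out of range *)
Definition coord (N : nat) (x : vec N) (k : nat) : R :=
  match @insub nat (fun k => ltn k N) 'I_N k with
  | Some i => x i
  | None => 0
  end.

Definition reflect_e (N : nat) (e x : vec N) : vec N :=
  fun i => x i - 2 * (dot e x / dot e e) * e i.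

(* u separable in B_R: every open half-space H with 0 in its boundary is
   H = {x | e.x > 0} for some e <> 0. *)
Definition separable (N : nat) (R0 : R) (u : vec N -> R) : Prop :=
  forall e : vec N, (exists i, e i <> 0) ->
    (forall x, inBall R0 x -> dot e x > 0 -> u x >= u (reflect_e e x)) \/
    (forall x, inBall R0 x -> dot e x > 0 -> u x <= u (reflect_e e x)).

Definition radially_symmetric (N : nat) (R0 : R) (u : vec N -> R) : Prop :=
  forall x y, inBall R0 x -> inBall R0 y -> norm x = norm y -> u x = u y.

Definition continuous_on_ball (N : nat) (R0 : R) (u : vec N -> R) : Prop :=
  forall x, inBall R0 x -> forall eps, eps > 0 -> exists delta, delta > 0 /\
    forall y, inBall R0 y -> norm (fun i => y i - x i) < delta ->
      Rabs (u y - u x) < eps.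

(* N x N real matrices, M i j = entry in row i, column j *)
Definition mat (N : nat) := 'I_N -> 'I_N -> R.

Definition orthogonal (N : nat) (M : mat N) : Prop :=
  forall i k : 'I_N,
    \big[Rplus/0]_(j < N) (M j i * M j k) = if i == k then 1 else 0.

(* M^T x, which equals M^{-1} x for M orthogonal *)
Definition mat_tapply (N : nat) (M : mat N) (x : vec N) : vec N :=
  fun i => \big[Rplus/0]_(j < N) (M j i * x j).

Definition u_M (N : nat) (u : vec N -> R) (M : mat N) : vec N -> R :=
  fun x => u (mat_tapply M x).

Definition circ_pt (N : nat) (a t : R) : vec N :=
  fun i => if nat_of_ord i == subn N 2 then a * cos t
           else if nat_of_ord i == subn N 1 then a * sin t else 0.

(* Call a direction [e] dominant when [u (s_e x) <= u x] on the side [e . x > 0] ([s_e] the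
   reflection across [e^perp]), and symmetric when [e] and [- e] are both dominant; separability
   says that [e] or [- e] is dominant. Since [u] is continuous, dominance is a closed condition on
   directions, so it propagates along any path of directions avoiding the symmetric ones; going
   around a circle of directions then shows that every plane contains a symmetric direction. Two
   symmetric directions generate a rotation preserving [u], under which every dominant direction
   of their span turns out symmetric: the symmetric directions and [0] form a subspace, which is a
   hyperplane [p^perp] because [u] is not radial. All directions [e] with [p . e > 0] are then
   dominant, which gives the monotonicity in the angle to [p], and those of [p^perp] are
   symmetric, which gives the axial symmetry about [p]. A Householder reflection takes the
   [x_N]-axis to [p]. *)

From HB Require Import structures.
From mathcomp Require Import ssreflect ssrfun ssrbool eqtype ssrnat seq choice fintype bigop zify.
From Stdlib Require Import Reals Lra Psatz FunctionalExtensionality Classical IndefiniteDescription.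

Set Implicit Arguments.
Unset Strict Implicit.
Open Scope R_scope.

Lemma Rplus_associative : associative Rplus.
Proof. by move=> x y z; rewrite Rplus_assoc. Qed.

HB.instance Definition _ :=
  Monoid.isComLaw.Build R 0 Rplus Rplus_associative Rplus_comm Rplus_0_l.

Section RealSums.
Variable n : nat.
Implicit Types f : 'I_n -> R.

Lemma sumR_scal a f :
  \big[Rplus/0]_(i < n) (a * f i) = a * \big[Rplus/0]_(i < n) f i.
Proof.
elim/big_rec2: _ => [|i y1 y2 _ ->]; first by rewrite Rmult_0_r.
by rewrite Rmult_plus_distr_l.
Qed.

Lemma sumR_ge0 f : (forall i, 0 <= f i) -> 0 <= \big[Rplus/0]_(i < n) f i.
Proof. by move=> f_ge0; elim/big_rec: _ => [|i y _ ?]; [lra | have := f_ge0 i; lra]. Qed.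

Lemma sumR_gt0 f k :
  (forall i, 0 <= f i) -> 0 < f k -> 0 < \big[Rplus/0]_(i < n) f i.
Proof.
move=> f_ge0 fk_gt0; rewrite (bigD1 k) //=.
apply: (Rlt_le_trans _ (f k + 0)); first lra.
apply: Rplus_le_compat_l.
by elim/big_rec: _ => [|i y _ ?]; [lra | have := f_ge0 i; lra].
Qed.

Lemma sumR_delta f k : (forall i, i != k -> f i = 0) -> \big[Rplus/0]_(i < n) f i = f k.
Proof.
by move=> f0; rewrite (bigD1 k) //= big1 ?Rplus_0_r.
Qed.

Lemma sumR_two f k1 k2 : k1 != k2 -> (forall i, i != k1 -> i != k2 -> f i = 0) ->
  \big[Rplus/0]_(i < n) f i = f k1 + f k2.
Proof.
move=> k12 f0; rewrite (bigD1 k1) // (bigD1 k2) 1?eq_sym //= big1 ?Rplus_0_r //.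
by move=> i /andP [] /f0; apply.
Qed.
End RealSums.

Definition vzero {N} : vec N := fun _ => 0.
Definition vadd N (x y : vec N) : vec N := fun i => x i + y i.
Definition vsub N (x y : vec N) : vec N := fun i => x i - y i.
Definition vscal N (a : R) (x : vec N) : vec N := fun i => a * x i.
Definition vopp N (x : vec N) : vec N := fun i => - x i.
Definition nonzero N (x : vec N) : Prop := exists i, x i <> 0.

Ltac vec_ring :=
  apply: functional_extensionality => ?;
  unfold vzero, vadd, vsub, vscal, vopp; simpl; ring.

Section DotProduct.
Variable N : nat.
Implicit Types x y z : vec N.

Lemma dotC x y : dot x y = dot y x.
Proof. by apply: eq_bigr => i _; rewrite Rmult_comm. Qed.

Lemma dotDl x y z : dot (vadd x y) z = dot x z + dot y z.
Proof. by rewrite /dot -big_split; apply: eq_bigr => i _ /=; rewrite /vadd; ring. Qed.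

Lemma dotZl a x y : dot (vscal a x) y = a * dot x y.
Proof. by rewrite /dot -sumR_scal; apply: eq_bigr => i _; rewrite /vscal; ring. Qed.

Lemma dotNl x y : dot (vopp x) y = - dot x y.
Proof.
have -> : vopp x = vscal (-1) x by vec_ring.
by rewrite dotZl; ring.
Qed.

Lemma dotBl x y z : dot (vsub x y) z = dot x z - dot y z.
Proof.
have -> : vsub x y = vadd x (vopp y) by vec_ring.
by rewrite dotDl dotNl.
Qed.

Lemma dotDr x y z : dot z (vadd x y) = dot z x + dot z y.
Proof. by rewrite dotC dotDl !(dotC z). Qed.

Lemma dotZr a x y : dot y (vscal a x) = a * dot y x.
Proof. by rewrite dotC dotZl dotC. Qed.

Lemma dotNr x y : dot y (vopp x) = - dot y x.
Proof. by rewrite dotC dotNl dotC. Qed.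

Lemma dotBr x y z : dot z (vsub x y) = dot z x - dot z y.
Proof. by rewrite dotC dotBl !(dotC z). Qed.

Lemma dot0l x : dot vzero x = 0.
Proof. by rewrite /dot big1 // => i _; rewrite /vzero Rmult_0_l. Qed.

Lemma dot_ge0 x : 0 <= dot x x.
Proof. by apply: sumR_ge0 => i; nra. Qed.

Lemma dot_gt0 x : nonzero x -> 0 < dot x x.
Proof. by case=> k xk; apply: (sumR_gt0 (k := k)) => [i|]; nra. Qed.

Lemma dot_eq0 x : dot x x = 0 -> x = vzero.
Proof.
move=> x0; apply: functional_extensionality => i.
by apply: NNPP => xi; have := dot_gt0 (ex_intro _ i xi); lra.
Qed.

Lemma nonzero_dot x : nonzero x <-> dot x x <> 0.
Proof.
split=> [/dot_gt0|x0]; first lra.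
by apply: NNPP => xn0; apply: x0; rewrite (_ : x = vzero) ?dot0l //;
  apply: functional_extensionality => i; apply: NNPP => xi; apply: xn0; exists i.
Qed.

Lemma voppK x : vopp (vopp x) = x.
Proof. by vec_ring. Qed.

Lemma nonzero_vsub x y : x <> y -> nonzero (vsub x y).
Proof.
move=> xy; apply/nonzero_dot => /dot_eq0 xy0; apply: xy.
apply: functional_extensionality => i.
by have := f_equal (fun f => f i) xy0; rewrite /vsub /vzero; lra.
Qed.

Lemma nonzero_vopp x : nonzero x -> nonzero (vopp x).
Proof. by case=> i xi; exists i; rewrite /vopp; lra. Qed.

Lemma nonzero_vscal a x : a <> 0 -> nonzero x -> nonzero (vscal a x).
Proof. by move=> a0 [i xi]; exists i; apply: Rmult_integral_contrapositive. Qed.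

Lemma nonzero_of_dot x y : dot x y <> 0 -> nonzero x.
Proof. by move=> xy; apply/nonzero_dot => /dot_eq0 x0; apply: xy; rewrite x0 dot0l. Qed.

Lemma dot_norm x : dot x x = norm x * norm x.
Proof. by rewrite /norm sqrt_sqrt //; apply: dot_ge0. Qed.
End DotProduct.

Section Reflection.
Variable N : nat.
Implicit Types x y e : vec N.

Lemma reflectE e x : reflect_e e x = vsub x (vscal (2 * (dot e x / dot e e)) e).
Proof. by []. Qed.

Lemma reflect_zero x : reflect_e vzero x = x.
Proof. by apply: functional_extensionality => i; rewrite /reflect_e /vzero; ring. Qed.

Lemma dot_reflect_dir e x : nonzero e -> dot e (reflect_e e x) = - dot e x.
Proof. by move=> /nonzero_dot e0; rewrite reflectE dotBr dotZr; field. Qed.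

Lemma dot_reflect e x y : dot (reflect_e e x) (reflect_e e y) = dot x y.
Proof.
have [/dot_eq0 ->|e0] := Req_dec (dot e e) 0; first by rewrite !reflect_zero.
by rewrite !reflectE !(dotBl, dotBr, dotZl, dotZr) (dotC x e) ?(dotC y e); field.
Qed.

Lemma norm_reflect e x : norm (reflect_e e x) = norm x.
Proof. by rewrite /norm dot_reflect. Qed.

Lemma reflectK e x : reflect_e e (reflect_e e x) = x.
Proof.
have [/dot_eq0 ->|e0] := Req_dec (dot e e) 0; first by rewrite !reflect_zero.
apply: functional_extensionality => i.
by rewrite {1}/reflect_e reflectE dotBr dotZr /vsub /vscal; field.
Qed.

Lemma reflectZ a e x : a <> 0 -> reflect_e (vscal a e) x = reflect_e e x.
Proof.
move=> a0; have [/dot_eq0 ->|e0] := Req_dec (dot e e) 0.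
  by rewrite (_ : vscal a vzero = vzero); [rewrite !reflect_zero|vec_ring].
apply: functional_extensionality => i.
by rewrite /reflect_e !(dotZl, dotZr) /vscal; field.
Qed.

Lemma reflectN e x : reflect_e (vopp e) x = reflect_e e x.
Proof. by rewrite (_ : vopp e = vscal (-1) e) ?reflectZ //; [lra | vec_ring]. Qed.

Lemma reflect_swap x y : dot x x = dot y y -> x <> y ->
  reflect_e (vsub x y) x = y /\ 0 < dot (vsub x y) x.
Proof.
move=> xy /nonzero_vsub /dot_gt0 d_gt0.
have dd : dot (vsub x y) (vsub x y) = 2 * (dot x x - dot x y).
  by rewrite !(dotBl, dotBr) (dotC y x); lra.
have dx : dot (vsub x y) x = dot x x - dot x y by rewrite dotBl dotC.
split; last lra.
by apply: functional_extensionality => i; rewrite /reflect_e dd dx /vsub; field; lra.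
Qed.

Lemma reflect_sphere_swap x y : dot x x = dot y y -> reflect_e (vsub x y) x = y.
Proof.
move=> xy; have [<-|x_ne_y] := classic (x = y); last exact: (reflect_swap xy x_ne_y).1.
by rewrite (_ : vsub x x = vzero) ?reflect_zero //; vec_ring.
Qed.
End Reflection.

Section Dominance.
Variables (N : nat) (R0 : R) (u : vec N -> R).
Implicit Types x y e : vec N.

Definition dominant e :=
  forall x, inBall R0 x -> dot e x > 0 -> u (reflect_e e x) <= u x.

Definition symmetric_dir e := nonzero e /\ dominant e /\ dominant (vopp e).

Lemma inBall_reflect e x : inBall R0 x -> inBall R0 (reflect_e e x).
Proof. by rewrite /inBall norm_reflect. Qed.

Lemma separable_dominant : separable R0 u ->
  forall e, nonzero e -> dominant e \/ dominant (vopp e).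
Proof.
move=> sep_u e e0; case: (sep_u e e0) => u_e; [left | right] => x x_in ex.
  by have := u_e x x_in ex; lra.
rewrite reflectN -{2}(reflectK e x); apply: u_e; first exact: inBall_reflect.
by rewrite dot_reflect_dir // -dotNl.
Qed.

Lemma dominantZ a e : a > 0 -> dominant e -> dominant (vscal a e).
Proof.
move=> a_gt0 dom_e x x_in; rewrite dotZl reflectZ; last lra.
by move=> aex; apply: dom_e => //; apply: (Rmult_lt_reg_l a); lra.
Qed.

Lemma symmetric_dirN e : symmetric_dir e -> symmetric_dir (vopp e).
Proof.
case=> e0 [dom_e dom_Ne]; split; first exact: nonzero_vopp.
by rewrite voppK.
Qed.

Lemma symmetric_dirZ a e : a <> 0 -> symmetric_dir e -> symmetric_dir (vscal a e).
Proof.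
move=> a0; wlog a_gt0 : a e a0 / a > 0 => [hwlog|].
  case: (Rlt_le_dec 0 a) => [|a_le0 /symmetric_dirN]; first exact: hwlog.
  rewrite (_ : vscal a e = vscal (- a) (vopp e)); last by vec_ring.
  by apply: hwlog; lra.
case=> e0 [dom_e dom_Ne]; split; first exact: nonzero_vscal.
rewrite (_ : vopp (vscal a e) = vscal a (vopp e)); last by vec_ring.
by split; apply: dominantZ.
Qed.

Lemma symmetric_dir_reflect e : symmetric_dir e ->
  forall x, inBall R0 x -> u (reflect_e e x) = u x.
Proof.
case=> e0 [dom_e dom_Ne] x x_in.
have y_in := inBall_reflect e x_in.
have [ex_lt0|[ex0|ex_gt0]] := Rtotal_order (dot e x) 0.
- have := dom_Ne x x_in; rewrite dotNl reflectN => /(_ ltac:(lra)).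
  have := dom_e _ y_in; rewrite reflectK dot_reflect_dir // => /(_ ltac:(lra)).
  lra.
- congr u; apply: functional_extensionality => i.
  by rewrite /reflect_e ex0 /Rdiv Rmult_0_l; ring.
- have := dom_e x x_in ex_gt0.
  have := dom_Ne _ y_in; rewrite reflectN reflectK dotNl dot_reflect_dir // => /(_ ltac:(lra)).
  lra.
Qed.

(* The witness is [x - y] for two points of one sphere with [u y < u x]. *)
Lemma not_radial_dominant : separable R0 u -> ~ radially_symmetric R0 u ->
  exists v, nonzero v /\ dominant v /\ ~ dominant (vopp v).
Proof.
move=> sep_u not_rad.
have [x [y [x_in [y_in [xy_norm uxy]]]]] :
    exists x y, inBall R0 x /\ inBall R0 y /\ norm x = norm y /\ u y < u x.
  apply: NNPP => Hc; apply: not_rad => x y x_in y_in xy_norm.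
  have [uxy|[//|uxy]] := Rtotal_order (u x) (u y); exfalso; apply: Hc.
    by exists y, x.
  by exists x, y.
have xy_dot : dot x x = dot y y by rewrite !dot_norm xy_norm.
have x_ne_y : x <> y by move=> xy; rewrite xy in uxy; lra.
have [refl_x dx_gt0] := reflect_swap xy_dot x_ne_y.
have dy_lt0 : dot (vsub x y) y < 0.
  by move: dx_gt0; rewrite !dotBl (dotC y x) xy_dot; lra.
have v0 := nonzero_vsub x_ne_y.
set v := vsub x y in refl_x dx_gt0 dy_lt0 v0 *.
have refl_y : reflect_e v y = x by rewrite -refl_x reflectK.
exists v; split=> //; split.
  by case: (separable_dominant sep_u v0) => // /(_ y y_in); rewrite dotNl reflectN refl_y; lra.
by move=> /(_ y y_in); rewrite dotNl reflectN refl_y => /(_ ltac:(lra)); lra.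
Qed.
End Dominance.

Definition line N (A B : vec N) (s : R) : vec N := vadd A (vscal s B).

Section LineOfDirections.
Variables (N : nat) (A B : vec N).
Implicit Types x y : vec N.

Lemma dot_line x s : dot (line A B s) x = dot A x + s * dot B x.
Proof. by rewrite dotDl dotZl. Qed.

Lemma dot_line_line s :
  dot (line A B s) (line A B s) = dot A A + 2 * s * dot A B + s * s * dot B B.
Proof. by rewrite !dot_line !dotDr !dotZr (dotC B A); ring. Qed.

Lemma norm_lt_sqr x d : 0 < d -> dot x x < d * d -> norm x < d.
Proof.
move=> d_gt0 xd; rewrite /norm -(sqrt_square d); last lra.
by apply: sqrt_lt_1_alt; split=> //; apply: dot_ge0.
Qed.

(* The squared distance below is an explicit rational function of [s], vanishing at [T]. *)
Lemma reflect_line_continuous T x : nonzero (line A B T) ->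
  forall d, d > 0 -> exists eta, eta > 0 /\ forall s, Rabs (s - T) < eta -> nonzero (line A B s) ->
    norm (vsub (reflect_e (line A B s) x) (reflect_e (line A B T) x)) < d.
Proof.
move=> /nonzero_dot nT0 d d_gt0.
set eT := line A B T in nT0 *.
set phi := dot eT x / dot eT eT.
set a0 := dot A x; set a1 := dot B x.
set c0 := dot A A; set c1 := dot A B; set c2 := dot B B.
set m0 := dot A eT; set m1 := dot B eT.
pose F s := 4 * ((a0 + s * a1) * (a0 + s * a1) - 2 * (a0 + s * a1) * phi * (m0 + s * m1))
             / (c0 + 2 * s * c1 + s * s * c2) + 4 * phi * phi * dot eT eT.
have nT : dot eT eT = c0 + 2 * T * c1 + T * T * c2 by rewrite dot_line_line.
have qT : dot eT x = a0 + T * a1 by rewrite dot_line.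
have mT : dot eT eT = m0 + T * m1 by rewrite {1}/eT dot_line.
have F_cont : continuity_pt F T by rewrite /F; reg; rewrite -nT.
have FT0 : F T = 0 by rewrite /F -nT -qT -mT /phi; field.
have [eta [eta_gt0 F_near]] := F_cont (d * d) ltac:(nra).
exists eta; split=> // s sT /nonzero_dot ns0; apply: norm_lt_sqr => //.
have -> : dot (vsub (reflect_e (line A B s) x) (reflect_e eT x))
              (vsub (reflect_e (line A B s) x) (reflect_e eT x)) = F s.
  rewrite !reflectE (_ : forall w, vsub (vsub x w) (vsub x (vscal (2 * phi) eT)) =
     vsub (vscal (2 * phi) eT) w); last by move=> w; vec_ring.
  rewrite !(dotBl, dotBr, dotZl, dotZr) dot_line_line dot_line (dotC eT) dot_line.
  rewrite dot_line_line in ns0.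
  by rewrite /F -/a0 -/a1 -/c0 -/c1 -/c2 -/m0 -/m1; field.
have [->|sT'] := Req_dec s T; first by rewrite FT0; nra.
have := F_near s; rewrite /D_x /no_cond /dist /= /R_dist FT0 Rminus_0_r.
move=> /(_ (conj (conj I (not_eq_sym sT')) sT)).
by have := Rle_abs (F s); lra.
Qed.
End LineOfDirections.

Definition closed_pred (P : R -> Prop) :=
  forall t, (forall eps, eps > 0 -> exists s, Rabs (s - t) < eps /\ P s) -> P t.

(* Connectedness of [0, 1], via the supremum of the [t] with [[0, t]] inside [P]. *)
Lemma interval_connected (P Q : R -> Prop) :
  closed_pred P -> closed_pred Q ->
  (forall t, 0 <= t <= 1 -> P t \/ Q t) ->
  (forall t, 0 <= t <= 1 -> P t -> Q t -> False) ->
  P 0 -> P 1.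
Proof.
move=> P_closed Q_closed PQ_cover PQ_disj P0.
pose E t := 0 <= t <= 1 /\ forall s, 0 <= s <= t -> P s.
have E0 : E 0 by split=> [|s s0]; [lra | rewrite (_ : s = 0) //; lra].
have E_bounded : bound E by exists 1 => t [? _]; lra.
have [T [T_ub T_lub]] := completeness E E_bounded (ex_intro _ 0 E0).
have T_ge0 : 0 <= T by apply: T_ub.
have T_le1 : T <= 1 by apply: T_lub => t [? _]; lra.
have T_approx : forall eps, eps > 0 -> exists s, E s /\ T - eps < s.
  move=> eps eps_gt0; apply: NNPP => no_s.
  suff : T <= T - eps by lra.
  apply: T_lub => t Et; apply: Rnot_lt_le => tT; apply: no_s; by exists t.
have P_below : forall s, 0 <= s < T -> P s.
  move=> s s_in; have [s' [[_ Ps'] s's]] := T_approx (T - s) ltac:(lra).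
  by apply: Ps'; lra.
have PT : P T.
  apply: P_closed => eps eps_gt0.
  have [s [[s_in Ps] Ts]] := T_approx eps eps_gt0.
  have sT : s <= T by apply: T_ub.
  by exists s; split; [rewrite Rabs_left1; lra | apply: Ps; lra].
have [T1|T_lt1] := Req_dec T 1; first by rewrite -T1.
exfalso; apply: (PQ_disj T) => //; apply: Q_closed => eps eps_gt0.
pose e := Rmin eps (1 - T).
have e_gt0 : e > 0 by apply: Rmin_pos; lra.
have [e_le_eps e_le] : e <= eps /\ e <= 1 - T by split; [apply: Rmin_l | apply: Rmin_r].
have [s [s_in notPs]] : exists s, T < s < T + e /\ ~ P s.
  apply: NNPP => all_P.
  suff : E (T + e / 2) by move=> /T_ub; lra.
  split=> [|s s_in]; first lra.
  have [sT|sT] := Rlt_le_dec T s; last first.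
    by case: (Req_dec s T) => [->|]; [| move=> ?; apply: P_below; lra].
  by apply: NNPP => notPs; apply: all_P; exists s; split; [lra|].
exists s; split; first by rewrite Rabs_right; lra.
by case: (PQ_cover s ltac:(lra)).
Qed.

Section Propagation.
Variables (N : nat) (R0 : R) (u : vec N -> R).
Hypothesis u_cont : continuous_on_ball R0 u.
Hypothesis u_sep : separable R0 u.
Implicit Types x y A B : vec N.

Lemma dominant_closed A B : closed_pred (fun s => dominant R0 u (line A B s)).
Proof.
move=> T dom_near x x_in qT_gt0; apply: Rnot_lt_le => uxy.
set eT := line A B T in qT_gt0 uxy.
set y := reflect_e eT x in uxy.
have [d [d_gt0 u_near]] :=
  u_cont (inBall_reflect eT x_in) (eps := u y - u x) ltac:(lra).
have [eta1 [eta1_gt0 refl_near]] :=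
  reflect_line_continuous x (nonzero_of_dot (Rgt_not_eq _ _ qT_gt0)) d_gt0.
set a1 := dot B x.
pose eta := Rmin eta1 (dot eT x / (Rabs a1 + 1)).
have a1_pos : 0 < Rabs a1 + 1 by have := Rabs_pos a1; lra.
have eta_gt0 : eta > 0 by apply: Rmin_pos => //; apply: Rdiv_lt_0_compat.
have [s [sT dom_s]] := dom_near eta eta_gt0.
have sT1 : Rabs (s - T) < eta1 by apply: (Rlt_le_trans _ eta) => //; apply: Rmin_l.
have sT2 : Rabs (s - T) * (Rabs a1 + 1) < dot eT x.
  have : Rabs (s - T) < dot eT x / (Rabs a1 + 1).
    by apply: (Rlt_le_trans _ eta) => //; apply: Rmin_r.
  move=> /(Rmult_lt_compat_r (Rabs a1 + 1) _ _ a1_pos).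
  by rewrite /Rdiv Rmult_assoc Rinv_l ?Rmult_1_r; lra.
have qs_gt0 : dot (line A B s) x > 0.
  have : Rabs ((s - T) * a1) <= Rabs (s - T) * (Rabs a1 + 1).
    by rewrite Rabs_mult; apply: Rmult_le_compat_l; [apply: Rabs_pos | lra].
  have := Rle_abs (- ((s - T) * a1)); rewrite Rabs_Ropp.
  have : dot eT x = dot A x + T * a1 by rewrite dot_line.
  by rewrite dot_line -/a1; lra.
have := refl_near s sT1 (nonzero_of_dot (Rgt_not_eq _ _ qs_gt0)).
move=> /(u_near _ (inBall_reflect _ x_in)) /Rabs_def2 [_]; rewrite -/y.
by have := dom_s x x_in qs_gt0; lra.
Qed.

Lemma lineN A B s : vopp (line A B s) = line (vopp A) (vopp B) s.
Proof. by rewrite /line; vec_ring. Qed.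

Lemma dominant_along_segment A B :
  (forall t, 0 <= t <= 1 -> nonzero (line A B t) /\ ~ symmetric_dir R0 u (line A B t)) ->
  dominant R0 u (line A B 0) -> dominant R0 u (line A B 1).
Proof.
move=> seg; apply: (@interval_connected (fun t => dominant R0 u (line A B t))
  (fun t => dominant R0 u (vopp (line A B t)))).
- exact: dominant_closed.
- move=> t near; rewrite lineN; apply: dominant_closed => eps /near [s].
  by rewrite lineN; exists s.
- by move=> t /seg [t0 _]; apply: separable_dominant.
- by move=> t /seg [t0 not_sym] dom_t dom_Nt; apply: not_sym.
Qed.
End Propagation.

Lemma linear_decrease_neg (h : nat -> R) a b : b > 0 ->
  (forall j, h j <= a - INR j * b) -> exists j, h j < 0.
Proof.
move=> b_gt0 h_le; have [j jab] := INR_unbounded (a / b).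
exists j; have := h_le j.
have := Rmult_lt_compat_r b _ _ b_gt0 jab.
by rewrite /Rdiv Rmult_assoc Rinv_l; lra.
Qed.

(* If [g = - f] stayed nonnegative, [g (j+2) - 2 g (j+1) + g j = - 2 (1 - c) g (j+1)] would make
   it concave, hence nondecreasing, hence concave at a uniform rate: impossible. *)
Lemma recurrence_sign_change (f : nat -> R) c : c < 1 -> f 0%nat < 0 ->
  (forall j, f j.+2 + f j = 2 * c * f j.+1) -> exists j, f j > 0.
Proof.
move=> c_lt1 f0_lt0 f_rec; apply: NNPP => no_pos.
pose g j := - f j; pose d j := g j.+1 - g j.
have g_ge0 j : 0 <= g j by apply: Rnot_lt_le => gj; apply: no_pos; exists j; rewrite /g in gj; lra.
have d_step j : d j.+1 = d j - 2 * (1 - c) * g j.+1.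
  by have := f_rec j; rewrite /d /g; lra.
have d_ge0 m : 0 <= d m.
  apply: Rnot_lt_le => dm_lt0.
  have d_le n : d (m + n)%nat <= d m.
    elim: n => [|n IHn]; first by rewrite addn0; lra.
    by rewrite addnS d_step; have := g_ge0 (m + n).+1; nra.
  have [j /Rlt_not_le] : exists j, g (m + j)%nat < 0.
    apply: (linear_decrease_neg (a := g m) (b := - d m)); first lra.
    elim=> [|j IHj]; first by rewrite addn0 /=; lra.
    rewrite addnS S_INR (_ : g (m + j).+1 = g (m + j)%nat + d (m + j)%nat).
      by have := d_le j; lra.
    by rewrite /d; ring.
  by apply; apply: g_ge0.
have g_ge_g0 j : g 0%nat <= g j.
  by elim: j => [|j IHj]; [lra | have := d_ge0 j; rewrite /d; lra].
have [j /Rlt_not_le] : exists j, d j < 0.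
  apply: (linear_decrease_neg (a := d 0%nat) (b := 2 * (1 - c) * g 0%nat)).
    by rewrite /g; nra.
  elim=> [|j IHj]; first by rewrite /=; lra.
  by rewrite d_step S_INR; have := g_ge_g0 j.+1; nra.
by apply; apply: d_ge0.
Qed.

Definition lincomb N (z1 z2 : vec N) (a b : R) : vec N := vadd (vscal a z1) (vscal b z2).

Section PlaneReflections.
Variables (N : nat) (z1 z2 : vec N) (a b : R).
Implicit Types w y : vec N.

Notation g11 := (dot z1 z1).
Notation g12 := (dot z1 z2).
Notation g22 := (dot z2 z2).
Notation e := (lincomb z1 z2 a b).

Definition rotation w := reflect_e z2 (reflect_e z1 w).

(* Points of the affine plane [w + span (z1, z2)], which all the reflections below preserve. *)
Definition plane_pt w (v : R * R) : vec N := vadd w (lincomb z1 z2 v.1 v.2).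

Lemma plane_pt0 w : plane_pt w (0, 0) = w.
Proof. by rewrite /plane_pt /lincomb; vec_ring. Qed.

Lemma dot_lincomb y p q : dot (lincomb z1 z2 p q) y = p * dot z1 y + q * dot z2 y.
Proof. by rewrite dotDl !dotZl. Qed.

Lemma dot_plane_pt y w p q : dot y (plane_pt w (p, q)) = dot y w + p * dot y z1 + q * dot y z2.
Proof. by rewrite /plane_pt dotDr (dotC y (lincomb _ _ _ _)) dot_lincomb /= !(dotC _ y); ring. Qed.

Lemma reflect1_plane_pt w p q : reflect_e z1 (plane_pt w (p, q)) =
  plane_pt w (p - 2 * ((dot z1 w + p * g11 + q * g12) / g11), q).
Proof.
apply: functional_extensionality => i.
by rewrite /reflect_e dot_plane_pt /plane_pt /lincomb /vadd /vscal /=; ring.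
Qed.

Lemma reflect2_plane_pt w p q : reflect_e z2 (plane_pt w (p, q)) =
  plane_pt w (p, q - 2 * ((dot z2 w + p * g12 + q * g22) / g22)).
Proof.
apply: functional_extensionality => i.
by rewrite /reflect_e dot_plane_pt (dotC z2 z1) /plane_pt /lincomb /vadd /vscal /=; ring.
Qed.

Lemma dot_lincomb_plane_pt w p q : dot e (plane_pt w (p, q)) =
  a * (dot z1 w + p * g11 + q * g12) + b * (dot z2 w + p * g12 + q * g22).
Proof. by rewrite dot_lincomb !dot_plane_pt (dotC z2 z1); ring. Qed.

Lemma dot_lincomb_lincomb : dot e e = a * a * g11 + 2 * a * b * g12 + b * b * g22.
Proof. by rewrite dot_lincomb !(dotC _ e) !dot_lincomb (dotC z2 z1); ring. Qed.

Lemma reflect_lincomb_plane_pt w p q : reflect_e e (plane_pt w (p, q)) =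
  plane_pt w (p - 2 * (dot e (plane_pt w (p, q)) / dot e e) * a,
              q - 2 * (dot e (plane_pt w (p, q)) / dot e e) * b).
Proof.
apply: functional_extensionality => i.
by rewrite /reflect_e /plane_pt /lincomb /vadd /vscal /=; ring.
Qed.

Hypotheses (z1_0 : g11 <> 0) (z2_0 : g22 <> 0).

Lemma rotation_reflect_rotation w : dot e e <> 0 ->
  rotation (reflect_e e (rotation w)) = reflect_e e w.
Proof.
rewrite dot_lincomb_lincomb => e0.
rewrite /rotation -(plane_pt0 w) !(reflect1_plane_pt, reflect2_plane_pt, reflect_lincomb_plane_pt).
rewrite !dot_lincomb_plane_pt dot_lincomb_lincomb.
by congr plane_pt; congr pair; field.
Qed.

(* [j |-> dot e (rotation^j y)] solves a linear recurrence whose coefficient [c] is the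
   cosine of twice the angle between [z1] and [z2]. *)
Lemma dot_lincomb_rotation_rec y :
  dot e (rotation (rotation y)) + dot e y =
  2 * (2 * (g12 * g12) / (g11 * g22) - 1) * dot e (rotation y).
Proof.
rewrite /rotation -(plane_pt0 y) !(reflect1_plane_pt, reflect2_plane_pt).
by rewrite !dot_lincomb_plane_pt; field.
Qed.
End PlaneReflections.

Definition independent N (x y : vec N) := dot x y * dot x y < dot x x * dot y y.

Lemma independent_dot_gt0 N (x y : vec N) : independent x y -> 0 < dot x x /\ 0 < dot y y.
Proof.
rewrite /independent => xy; have := dot_ge0 x; have := dot_ge0 y.
by have := Rle_0_sqr (dot x y); rewrite /Rsqr; split; nra.
Qed.

Section Symmetries.
Variables (N : nat) (R0 : R) (u : vec N -> R).
Implicit Types x y w z : vec N.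

Lemma symmetric_dir_ball z : symmetric_dir R0 u z ->
  forall x, inBall R0 x -> inBall R0 (reflect_e z x) /\ u (reflect_e z x) = u x.
Proof.
by move=> z_sym x x_in; split; [apply: inBall_reflect | apply: (symmetric_dir_reflect z_sym)].
Qed.

(* The rotation [r] built from the two symmetries preserves [u] and satisfies [r s_e r = s_e],
   and some power of it makes [dot e x] change sign. *)
Lemma dominant_lincomb_symmetric z1 z2 a b :
  symmetric_dir R0 u z1 -> symmetric_dir R0 u z2 -> independent z1 z2 ->
  nonzero (lincomb z1 z2 a b) -> dominant R0 u (lincomb z1 z2 a b) ->
  dominant R0 u (vopp (lincomb z1 z2 a b)).
Proof.
move=> z1_sym z2_sym z12 /nonzero_dot e0 dom_e.
have [g11_gt0 g22_gt0] := independent_dot_gt0 z12.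
set e := lincomb z1 z2 a b in e0 dom_e *.
set r := rotation z1 z2.
set c := 2 * (dot z1 z2 * dot z1 z2) / (dot z1 z1 * dot z2 z2) - 1.
have c_lt1 : c < 1.
  suff : dot z1 z2 * dot z1 z2 / (dot z1 z1 * dot z2 z2) < 1 by rewrite /c /Rdiv; lra.
  have D_gt0 : 0 < dot z1 z1 * dot z2 z2 by nra.
  apply: (Rmult_lt_reg_r _ _ _ D_gt0); rewrite /Rdiv Rmult_assoc Rinv_l; last lra.
  by move: z12; rewrite /independent; lra.
have r_inv j w : inBall R0 w -> inBall R0 (iter j r w) /\ u (iter j r w) = u w.
  elim: j => [//|j IHj] /IHj [w_in <-] /=.
  have [w1_in <-] := symmetric_dir_ball z1_sym w_in.
  exact: symmetric_dir_ball z2_sym _ w1_in.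
have r_conj j w : iter j r (reflect_e e (iter j r w)) = reflect_e e w.
  elim: j w => [//|j IHj] w.
  by rewrite [iter j.+1 r w]iterS iterSr /r rotation_reflect_rotation; [apply: IHj | lra | lra |].
move=> x x_in; rewrite dotNl => ex_lt0.
have rec j : dot e (iter j.+2 r x) + dot e (iter j r x) = 2 * c * dot e (iter j.+1 r x).
  by rewrite !iterS /r dot_lincomb_rotation_rec //; lra.
have ex0 : dot e (iter 0 r x) < 0 by rewrite /=; lra.
have [j ejx] := recurrence_sign_change c_lt1 ex0 rec.
have [y_in uy] := r_inv j x x_in.
rewrite reflectN -(r_conj j x); have [_ ->] := r_inv j _ (inBall_reflect e y_in).
by rewrite -uy; apply: dom_e.
Qed.
End Symmetries.

Definition unit_vec N (k : 'I_N) : vec N := fun i => if i == k then 1 else 0.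

Lemma dot_unit_vec N (x : vec N) k : dot (unit_vec k) x = x k.
Proof.
rewrite /dot (sumR_delta (k := k)); first by rewrite /unit_vec eqxx; ring.
by move=> i /negbTE; rewrite /unit_vec => ->; ring.
Qed.

Section SymmetryHyperplane.
Variables (N : nat) (R0 : R) (u : vec N -> R).
Hypothesis u_cont : continuous_on_ball R0 u.
Hypothesis u_sep : separable R0 u.
Implicit Types x y w z : vec N.

Definition sym_or_zero z := z = vzero \/ symmetric_dir R0 u z.

Lemma lincomb_nonzero w1 w2 a b : independent w1 w2 -> (a <> 0 \/ b <> 0) ->
  nonzero (lincomb w1 w2 a b).
Proof.
move=> w12 ab; have [g11_gt0 _] := independent_dot_gt0 w12.
apply/nonzero_dot; rewrite dot_lincomb_lincomb => ab0.
have key : 0 = (a * dot w1 w1 + b * dot w1 w2) ^ 2 +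
               b * b * (dot w1 w1 * dot w2 w2 - dot w1 w2 * dot w1 w2).
  by rewrite -(Rmult_0_r (dot w1 w1)) -ab0; ring.
move: w12; rewrite /independent => w12.
have [b0|b0] := Req_dec b 0.
  have a0 : a <> 0 by case: ab.
  have := Rsqr_pos_lt (a * dot w1 w1) ltac:(apply: Rmult_integral_contrapositive; lra).
  by rewrite /Rsqr b0 in key *; lra.
have := pow2_ge_0 (a * dot w1 w1 + b * dot w1 w2).
by have := Rsqr_pos_lt b b0; rewrite /Rsqr => bb; nra.
Qed.

Lemma dependent_vscal z1 z2 : nonzero z1 -> ~ independent z1 z2 ->
  z2 = vscal (dot z1 z2 / dot z1 z1) z1.
Proof.
move=> /dot_gt0 g11_gt0 /Rnot_lt_le dep.
set lam := dot z1 z2 / dot z1 z1.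
suff /dot_eq0 : dot (vsub z2 (vscal lam z1)) (vsub z2 (vscal lam z1)) = 0.
  by move=> d0; apply: functional_extensionality => i;
    have := f_equal (fun f => f i) d0; rewrite /vsub /vscal /vzero; lra.
apply: Rle_antisym; last exact: dot_ge0.
rewrite !(dotBl, dotBr, dotZl, dotZr) (dotC z2 z1).
have -> : dot z2 z2 - lam * dot z1 z2 - (lam * dot z1 z2 - lam * (lam * dot z1 z1)) =
          (dot z1 z1 * dot z2 z2 - dot z1 z2 * dot z1 z2) / dot z1 z1 by rewrite /lam; field; lra.
by have := Rinv_0_lt_compat _ g11_gt0; rewrite /Rdiv; nra.
Qed.

Lemma sym_or_zeroZ a z : sym_or_zero z -> sym_or_zero (vscal a z).
Proof.
case=> [->|z_sym]; first by left; vec_ring.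
have [->|a0] := Req_dec a 0; first by left; vec_ring.
by right; apply: symmetric_dirZ.
Qed.

Lemma sym_or_zeroD z1 z2 : sym_or_zero z1 -> sym_or_zero z2 -> sym_or_zero (vadd z1 z2).
Proof.
case=> [->|z1_sym]; first by rewrite (_ : vadd vzero z2 = z2) //; vec_ring.
case=> [->|z2_sym]; first by rewrite (_ : vadd z1 vzero = z1); [right | vec_ring].
have [z12|dep] := classic (independent z1 z2); last first.
  have [z1_0 _] := z1_sym.
  rewrite (dependent_vscal z1_0 dep) (_ : forall c, vadd z1 (vscal c z1) = vscal (1 + c) z1).
    by apply: sym_or_zeroZ; right.
  by move=> c; vec_ring.
rewrite (_ : vadd z1 z2 = lincomb z1 z2 1 1); last by rewrite /lincomb; vec_ring.
have e0 : nonzero (lincomb z1 z2 1 1) by apply: lincomb_nonzero => //; left; lra.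
right; split=> //.
have eN : vopp (lincomb z1 z2 1 1) = lincomb z1 z2 (-1) (-1) by rewrite /lincomb; vec_ring.
case: (separable_dominant u_sep e0) => dom; split=> //.
- exact: dominant_lincomb_symmetric.
- move: dom; rewrite eN => dom.
  have eN_nz : nonzero (lincomb z1 z2 (-1) (-1)) by apply: lincomb_nonzero => //; left; lra.
  by have := dominant_lincomb_symmetric z1_sym z2_sym z12 eN_nz dom; rewrite -eN voppK.
Qed.

Lemma sym_or_zeroB z1 z2 : sym_or_zero z1 -> sym_or_zero z2 -> sym_or_zero (vsub z1 z2).
Proof.
move=> z1_s z2_s; rewrite (_ : vsub z1 z2 = vadd z1 (vscal (-1) z2)); last by vec_ring.
by apply: sym_or_zeroD => //; apply: sym_or_zeroZ.
Qed.

Lemma independentC w1 w2 : independent w1 w2 -> independent w2 w1.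
Proof. by rewrite /independent (dotC w2 w1) Rmult_comm. Qed.

Lemma independentNl w1 w2 : independent w1 w2 -> independent (vopp w1) w2.
Proof. by rewrite /independent dotNl dotNl dotNr; lra. Qed.

Lemma dominant_quarter_turn w1 w2 : independent w1 w2 ->
  (forall a b, (a <> 0 \/ b <> 0) -> ~ symmetric_dir R0 u (lincomb w1 w2 a b)) ->
  dominant R0 u w1 -> dominant R0 u w2.
Proof.
move=> w12 no_sym dom1.
have seg t : line w1 (vsub w2 w1) t = lincomb w1 w2 (1 - t) t by rewrite /line /lincomb; vec_ring.
have seg0 : line w1 (vsub w2 w1) 0 = w1 by rewrite /line; vec_ring.
have seg1 : line w1 (vsub w2 w1) 1 = w2 by rewrite /line; vec_ring.
rewrite -seg1; apply: dominant_along_segment => // [t _|]; last by rewrite seg0.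
have ab : 1 - t <> 0 \/ t <> 0 by have [->|] := Req_dec t 0; [left; lra | right].
by rewrite seg; split; [apply: lincomb_nonzero | apply: no_sym].
Qed.

Lemma dominant_half_turn w1 w2 : independent w1 w2 ->
  (forall a b, (a <> 0 \/ b <> 0) -> ~ symmetric_dir R0 u (lincomb w1 w2 a b)) ->
  dominant R0 u w1 -> dominant R0 u (vopp w1).
Proof.
move=> w12 no_sym /(dominant_quarter_turn w12 no_sym).
apply: dominant_quarter_turn; first exact/independentC/independentNl.
move=> a b ab; rewrite (_ : lincomb w2 (vopp w1) a b = lincomb w1 w2 (- b) a).
  by apply: no_sym; case: ab; [right | left; lra].
by rewrite /lincomb; vec_ring.
Qed.

(* Going around a circle of non-symmetric directions would turn [w1] into [- w1]. *)
Lemma plane_symmetric_dir w1 w2 : independent w1 w2 ->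
  exists a b, (a <> 0 \/ b <> 0) /\ symmetric_dir R0 u (lincomb w1 w2 a b).
Proof.
move=> w12; apply: NNPP => none.
have no_sym a b : a <> 0 \/ b <> 0 -> ~ symmetric_dir R0 u (lincomb w1 w2 a b).
  by move=> ab sym; apply: none; exists a, b.
have w1_0 : nonzero w1 by apply/nonzero_dot; have [] := independent_dot_gt0 w12; lra.
apply: (no_sym 1 0); first by left; lra.
rewrite (_ : lincomb w1 w2 1 0 = w1); last by rewrite /lincomb; vec_ring.
split=> //; case: (separable_dominant u_sep w1_0) => dom; split=> //.
  exact: dominant_half_turn no_sym dom.
rewrite -(voppK w1); apply: (@dominant_half_turn _ (vopp w2)) dom.
  exact/independentC/independentNl/independentC/independentNl.
move=> a b ab; rewrite (_ : lincomb (vopp w1) (vopp w2) a b = lincomb w1 w2 (- a) (- b)).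
  by apply: no_sym; case: ab; [left | right]; lra.
by rewrite /lincomb; vec_ring.
Qed.

Lemma sym_or_zero_decomp v (c : vec N) :
  (forall k, sym_or_zero (vsub (unit_vec k) (vscal (c k) v))) ->
  forall x, sym_or_zero (vsub x (vscal (dot c x) v)).
Proof.
move=> c_spec x.
have -> : vsub x (vscal (dot c x) v) =
    \big[@vadd N/vzero]_(k < N) vscal (x k) (vsub (unit_vec k) (vscal (c k) v)).
  apply: functional_extensionality => i.
  rewrite (big_morph (fun w : vec N => w i) (id1 := 0) (op1 := Rplus)) //.
  rewrite (eq_bigr (fun k => (if k == i then x k else 0) + - v i * (c k * x k))); last first.
    by move=> k _; rewrite /vscal /vsub /unit_vec (eq_sym i); case: (k == i); ring.
  rewrite big_split /= (sumR_delta (k := i)) ?eqxx; last by move=> k /negbTE ->.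
  by rewrite sumR_scal /vsub /vscal /dot; ring.
apply: big_ind => [|w1 w2|k _]; [by left | exact: sym_or_zeroD | exact: sym_or_zeroZ].
Qed.

Lemma sym_or_zero_hyperplane v : nonzero v -> ~ symmetric_dir R0 u v ->
  exists c : vec N, dot c v = 1 /\ forall x, sym_or_zero x <-> dot c x = 0.
Proof.
move=> v0 v_nsym.
have v_not : ~ sym_or_zero v by case=> // v_eq; case: v0 => i; rewrite v_eq.
have coord k : exists c, sym_or_zero (vsub (unit_vec k) (vscal c v)).
  have [vk|dep] := classic (independent v (unit_vec k)); last first.
    exists (dot v (unit_vec k) / dot v v); left.
    by rewrite -(dependent_vscal v0 dep); vec_ring.
  have [a [b [ab sym_ab]]] := plane_symmetric_dir vk.
  have [b0|b0] := Req_dec b 0.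
    exfalso; apply: v_nsym; have a0 : a <> 0 by case: ab.
    rewrite (_ : v = vscal (/ a) (lincomb v (unit_vec k) a b)).
      by apply: symmetric_dirZ => //; apply: Rinv_neq_0_compat.
    by apply: functional_extensionality => i; rewrite /lincomb /vadd /vscal b0; field.
  exists (- a / b); right.
  rewrite (_ : vsub _ _ = vscal (/ b) (lincomb v (unit_vec k) a b)).
      by apply: symmetric_dirZ => //; apply: Rinv_neq_0_compat.
  by apply: functional_extensionality => i; rewrite /lincomb /vsub /vadd /vscal /unit_vec; field.
have [c /sym_or_zero_decomp decomp] := functional_choice _ coord.
have scal_v a : sym_or_zero (vscal a v) -> a = 0.
  move=> av; apply: NNPP => a0; apply: v_not.
  rewrite (_ : v = vscal (/ a) (vscal a v)); first exact: sym_or_zeroZ.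
  by apply: functional_extensionality => i; rewrite /vscal; field.
exists c; split.
  have := decomp v; rewrite (_ : vsub v _ = vscal (1 - dot c v) v); last by vec_ring.
  by move=> /scal_v; lra.
split=> [x_s|cx0]; last by have := decomp x; rewrite cx0 (_ : vsub x _ = x) //; vec_ring.
apply: scal_v; have := sym_or_zeroB x_s (decomp x).
by rewrite (_ : vsub x _ = vscal (dot c x) v) //; vec_ring.
Qed.
End SymmetryHyperplane.

Section DominantDirection.
Variables (N : nat) (R0 : R) (u : vec N -> R).
Hypothesis u_cont : continuous_on_ball R0 u.
Hypothesis u_sep : separable R0 u.
Implicit Types x y e p : vec N.

Lemma dominant_halfspace p : (forall x, sym_or_zero R0 u x <-> dot p x = 0) ->
  dominant R0 u p -> forall e, 0 < dot p e -> dominant R0 u e.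
Proof.
move=> ker dom_p e pe.
have pp : 0 < dot p p by apply/dot_gt0/(nonzero_of_dot (y := e)); lra.
have seg0 : line p (vsub e p) 0 = p by rewrite /line; vec_ring.
have seg1 : line p (vsub e p) 1 = e by rewrite /line; vec_ring.
rewrite -seg1; apply: dominant_along_segment => // [t t01|]; last by rewrite seg0.
have pt : 0 < dot (line p (vsub e p) t) p by rewrite dot_line dotBl (dotC e p); nra.
split; first by apply: (nonzero_of_dot (y := p)); lra.
by move=> t_sym; have := proj1 (ker _) (or_intror t_sym); rewrite dotC; lra.
Qed.

Lemma dominant_direction v : nonzero v -> dominant R0 u v -> ~ dominant R0 u (vopp v) ->
  exists p, nonzero p /\ (forall e, 0 < dot p e -> dominant R0 u e) /\
    (forall e, nonzero e -> dot p e = 0 -> dominant R0 u e).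
Proof.
move=> v0 dom_v ndom_v.
have v_nsym : ~ symmetric_dir R0 u v by case=> _ [].
have [c [cv ker]] := sym_or_zero_hyperplane u_cont u_sep v0 v_nsym.
have c0 : nonzero c by apply: (nonzero_of_dot (y := v)); lra.
have orth p : (forall x, sym_or_zero R0 u x <-> dot p x = 0) ->
    forall e, nonzero e -> dot p e = 0 -> dominant R0 u e.
  by move=> kerp e e0 /kerp [e_eq|[_ []]] //; case: e0 => i; rewrite e_eq.
case: (separable_dominant u_sep c0) => dom_c.
  by exists c; split; [| split; [apply: dominant_halfspace | apply: orth]].
have kerN x : sym_or_zero R0 u x <-> dot (vopp c) x = 0.
  by rewrite dotNl; split=> [/ker | cx]; [lra | apply/ker; lra].
exists (vopp c); split; first exact: nonzero_vopp.
by split; [apply: dominant_halfspace | apply: orth].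
Qed.
End DominantDirection.

Section SphereComparison.
Variables (N : nat) (R0 : R) (u : vec N -> R).
Implicit Types x y p : vec N.

Lemma dominant_sphere_le x y : inBall R0 x -> dot x x = dot y y -> x <> y ->
  dominant R0 u (vsub x y) -> u y <= u x.
Proof.
move=> x_in xy x_ne_y dom; have [swap d_gt0] := reflect_swap xy x_ne_y.
by have := dom x x_in d_gt0; rewrite swap.
Qed.

Lemma dominant_orthogonal_const p :
  (forall e, nonzero e -> dot p e = 0 -> dominant R0 u e) ->
  forall x y, inBall R0 x -> inBall R0 y -> dot x x = dot y y -> dot p x = dot p y -> u x = u y.
Proof.
move=> p_orth x y x_in y_in xy pxy.
have [->|x_ne_y] := classic (x = y); first by [].
have y_ne_x : y <> x by move=> yx; apply: x_ne_y.
apply: Rle_antisym; apply: dominant_sphere_le => //; apply: p_orth;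
  by [apply: nonzero_vsub | rewrite dotBr; lra].
Qed.

Lemma dominant_halfspace_monotone p :
  (forall e, 0 < dot p e -> dominant R0 u e) ->
  forall x y, inBall R0 x -> dot x x = dot y y -> dot p y < dot p x -> u y <= u x.
Proof.
move=> p_half x y x_in xy pxy; apply: dominant_sphere_le => //.
  by move=> x_eq_y; rewrite x_eq_y in pxy; lra.
by apply: p_half; rewrite dotBr; lra.
Qed.
End SphereComparison.

(* For [h = 0] this is the identity, since [x / 0 = 0]. *)
Definition householder N (h : vec N) : mat N :=
  fun j i => (if j == i then 1 else 0) - 2 * (h j * h i) / dot h h.

Section Householder.
Variables (N : nat) (h : vec N).
Implicit Types x : vec N.

Lemma mat_tapply_householder x : mat_tapply (householder h) x = reflect_e h x.
Proof.
apply: functional_extensionality => i; rewrite /mat_tapply /householder /reflect_e.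
rewrite (eq_bigr (fun j => (if j == i then x j else 0) + (- 2 * h i / dot h h) * (h j * x j)));
  last by move=> j _; case: (j == i); rewrite /Rdiv; ring.
rewrite big_split /= (sumR_delta (k := i)) ?eqxx; last by move=> j /negbTE ->.
by rewrite sumR_scal /dot /Rdiv; ring.
Qed.

Lemma householder_orthogonal : orthogonal (householder h).
Proof.
move=> i k; rewrite /householder.
set D := dot h h.
rewrite (eq_bigr (fun j => ((if j == i then 1 else 0) - 2 * (h j * h i) / D) *
                             (if j == k then 1 else 0) +
                           ((if j == i then 1 else 0) - 2 * (h j * h i) / D) *
                             (- 2 * h k / D) * h j)); last by move=> j _; rewrite /Rdiv; ring.
rewrite big_split /= (sumR_delta (k := k)) ?eqxx; last by move=> j /negbTE ->; rewrite /Rdiv; ring.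
rewrite (eq_bigr (fun j => (if j == i then - 2 * h k / D * h j else 0) +
                           (4 * h i * h k / D / D) * (h j * h j))); last first.
  by move=> j _; case: (j == i); rewrite /Rdiv /=; ring.
rewrite big_split /= (sumR_delta (k := i)) ?eqxx; last by move=> j /negbTE ->.
rewrite sumR_scal -/(dot h h) -/D (eq_sym k i).
have [/dot_eq0 h0|D0] := Req_dec D 0.
  by rewrite /D h0 /vzero; case: (i == k); rewrite /Rdiv; ring.
by case: (i == k); field.
Qed.
End Householder.

Section LastCoordinates.
Variable N : nat.
Hypothesis N_ge2 : (2 <= N)%nat.

Lemma last_lt : (N - 1 < N)%nat. Proof. lia. Qed.
Lemma penult_lt : (N - 2 < N)%nat. Proof. lia. Qed.

Definition ord_last : 'I_N := Ordinal last_lt.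
Definition ord_penult : 'I_N := Ordinal penult_lt.

Lemma coord_last (x : vec N) : coord x (N - 1) = x ord_last.
Proof. by rewrite /coord (insubT (fun k => (k < N)%nat) last_lt) /=; congr x; apply: val_inj. Qed.

Lemma circ_pt_last a t : @circ_pt N a t ord_last = a * sin t.
Proof. by rewrite /circ_pt /= (_ : (N - 1 == N - 2)%nat = false) ?eqxx //; apply/eqP; lia. Qed.

Lemma dot_circ_pt a t : dot (@circ_pt N a t) (@circ_pt N a t) = a * a.
Proof.
have pl : ord_penult != ord_last by apply/eqP => /(f_equal val) /=; lia.
rewrite /dot (sumR_two pl).
  rewrite circ_pt_last /circ_pt /= eqxx.
  by have := sin2_cos2 t; rewrite /Rsqr; nra.
move=> i i_pl i_l; rewrite /circ_pt.
have -> : (nat_of_ord i == N - 2)%nat = false.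
  by apply: contraNF i_pl => /eqP i_eq; apply/eqP/val_inj.
have -> : (nat_of_ord i == N - 1)%nat = false.
  by apply: contraNF i_l => /eqP i_eq; apply/eqP/val_inj.
by ring.
Qed.

Lemma norm_circ_pt a t : 0 <= a -> norm (@circ_pt N a t) = a.
Proof. by move=> a_ge0; rewrite /norm dot_circ_pt sqrt_square. Qed.

Definition axis_frame (p : vec N) : mat N :=
  householder (vsub (unit_vec ord_last) (vscal (/ norm p) p)).

Lemma dot_axis_frame p x : nonzero p ->
  dot p (mat_tapply (axis_frame p) x) = norm p * x ord_last.
Proof.
move=> /dot_gt0; rewrite dot_norm => pp.
set np := norm p in pp *.
have np0 : np <> 0 by move=> np0; rewrite np0 in pp; lra.
have ppE : dot p p = np * np by rewrite dot_norm.
set q := vscal (/ np) p.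
have Ep : p = vscal np q by apply: functional_extensionality => i; rewrite /q /vscal; field.
have qq : dot (unit_vec ord_last) (unit_vec ord_last) = dot q q.
  by rewrite dot_unit_vec /unit_vec eqxx /q dotZl dotZr ppE; field.
rewrite {1}Ep mat_tapply_householder dotZl -{1}(reflect_sphere_swap qq).
by rewrite dot_reflect dot_unit_vec.
Qed.
End LastCoordinates.

Unset Implicit Arguments.
Set Strict Implicit.

Theorem theorem2p1 (N : nat) (R0 : R) (u : vec N -> R) :
  leq 2 N = true -> R0 > 0 ->
  continuous_on_ball R0 u ->
  (forall x, inBall R0 x -> u x > 0) ->
  separable R0 u ->
  ~ radially_symmetric R0 u ->
  exists M : mat N, orthogonal M /\
    (forall a h, 0 < a <= R0 -> -a <= h <= a ->
       forall x y : vec N, norm x = a -> norm y = a ->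
         coord x (subn N 1) = h -> coord y (subn N 1) = h ->
         u_M u M x = u_M u M y) /\
    (forall a, 0 < a <= R0 ->
       forall t1 t2, PI / 2 <= t1 -> t1 <= t2 -> t2 <= 3 * PI / 2 ->
         u_M u M (@circ_pt N a t2) <= u_M u M (@circ_pt N a t1)).
Proof.
move=> N_ge2 _ u_cont _ u_sep not_rad.
have [v [v0 [dom_v ndom_v]]] := not_radial_dominant u_sep not_rad.
have [p [p0 [p_half p_orth]]] := dominant_direction u_cont u_sep v0 dom_v ndom_v.
set M := axis_frame N_ge2 p.
have M_dot x : dot (mat_tapply M x) (mat_tapply M x) = dot x x.
  by rewrite mat_tapply_householder dot_reflect.
have M_ball x : norm x <= R0 -> inBall R0 (mat_tapply M x).
  by rewrite /inBall mat_tapply_householder norm_reflect.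
exists M; split; first exact: householder_orthogonal.
split=> [a h [_ a_le] _ x y xa ya xh yh | a [a_gt0 a_le] t1 t2 t1_ge t12 t2_le].
  apply: (dominant_orthogonal_const p_orth); try apply: M_ball; try lra.
    by rewrite !M_dot !dot_norm xa ya.
  by rewrite !dot_axis_frame // -!coord_last xh yh.
have [<-|t12'] := Req_dec t1 t2; first lra.
apply: (dominant_halfspace_monotone p_half).
- by apply: M_ball; rewrite (norm_circ_pt N_ge2); lra.
- by rewrite !M_dot !(dot_circ_pt N_ge2).
- rewrite !dot_axis_frame // !circ_pt_last.
  apply/Rmult_lt_compat_l; first exact/sqrt_lt_R0/dot_gt0.
  by apply/Rmult_lt_compat_l/sin_decreasing_1; lra.
Qed.
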